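(* In the setting below, $\operatorname{length}_{\mathcal{O}}\Phi_{\lambda_A}(A) = (n-t)\,w_{\mathbf{a}}$.
   Context: Let $\mathcal{O}$ be a discrete valuation ring with uniformiser $\varpi$ and normalised valuation $\nu$. Let $2\le m\le n$, $t=m-1$, $P=\mathcal{O}[X_{m\times n}]$ (polynomial ring in the entries of an $m\times n$ matrix of indeterminates $X$), and $A=P/\mathrm{I}_m(X)$, where $\mathrm{I}_k$ denotes the ideal of $k\times k$ minors. Fix integers $0\le a_1\le\cdots\le a_t$, $D=\operatorname{diag}(\varpi^{a_1},\ldots,\varpi^{a_t})$, $\Delta=\det D$. Let $\mathbf{a}\in\mathcal{O}^{m\times n}$ have zero last row and top $t$ entries of column $j$ equal to the $r$-th column of $D$, where $1\le r\le t$, $r\equiv j\pmod t$. Let $\lambda_A\colon A\to\mathcal{O}$ be the $\mathcal{O}$-algebra map induced by $X_{ij}\mapsto\mathbf{a}_{ij}$. For $\mathfrak{p}=\ker\lambda_A$, $\Phi_{\lambda_A}(A)=\operatorname{tors}(\mathfrak{p}/\mathfrak{p}^2)$. $w_{\mathbf{a}}=\nu(\Delta)=\operatorname{length}_{\mathcal{O}}(\mathcal{O}/\mathrm{I}_t(\mathbf{a}))$. *)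

From HB Require Import structures.
From mathcomp Require Import all_boot all_order all_algebra.
From mathcomp Require Import mpoly.
Set Implicit Arguments. Unset Strict Implicit. Unset Printing Implicit Defensive.
Import Order.TTheory GRing.Theory Num.Theory.
Local Open Scope ring_scope.

(* [dvr_val pi x k] : x = u * pi^k with u a unit, i.e. nu(x) = k. *)
Definition dvr_val (R : idomainType) (pi x : R) (k : nat) : Prop :=
  exists2 u : R, u \is a GRing.unit & x = u * pi ^+ k.

Definition is_dvr_uniformiser (R : idomainType) (pi : R) : Prop :=
  [/\ pi != 0, pi \isn't a GRing.unit &
      forall x : R, x != 0 -> exists k, dvr_val pi x k].

Section Alg.
Variables (R : comNzRingType) (P : comAlgType R).

Definition is_submod (S : P -> Prop) : Prop :=
  [/\ S 0, (forall x y, S x -> S y -> S (x + y)) &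
      (forall (c : R) x, S x -> S (c *: x))].

Definition is_ideal (J : P -> Prop) : Prop :=
  [/\ J 0, (forall x y, J x -> J y -> J (x + y)) &
      (forall (g : P) x, J x -> J (g * x))].

Definition ideal_gen (S : P -> Prop) : P -> Prop :=
  fun x => forall J, is_ideal J -> (forall s, S s -> J s) -> J x.

Definition subsetP (A B : P -> Prop) : Prop := forall x, A x -> B x.

(* a strictly increasing chain  N = c 0 < c 1 < ... < c k = T  of R-submodules
   of P, i.e. a chain of length k of submodules of the module T/N *)
Definition submod_chain (N T : P -> Prop) (k : nat) : Prop :=
  exists c : nat -> P -> Prop,
    [/\ (forall x, c 0%N x <-> N x), (forall x, c k x <-> T x),
        (forall i, (i <= k)%N -> is_submod (c i)) &
        (forall i, (i < k)%N -> subsetP (c i) (c i.+1) /\ ~ subsetP (c i.+1) (c i))].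

(* length_R (T/N) = l  (for N <= T submodules): maximal chain length is l *)
Definition module_length (N T : P -> Prop) (l : nat) : Prop :=
  submod_chain N T l /\ ~ submod_chain N T l.+1.
End Alg.

Section Det.
Variables (R : idomainType) (m n : nat).

Local Notation P := {mpoly R[m * n]}.

Definition var_idx (i : 'I_m) (j : 'I_n) : 'I_(m * n) := mxvec_index i j.

Definition genericmx : 'M[P]_(m, n) := \matrix_(i, j) 'X_(var_idx i j).

Definition kminors (k : nat) (M : 'M[P]_(m, n)) : P -> Prop :=
  fun f => exists (r : 'I_k -> 'I_m) (c : 'I_k -> 'I_n),
    [/\ injective r, injective c & f = \det (\matrix_(i, j) M (r i) (c j))].

Definition evalmx (a : 'M[R]_(m, n)) (f : P) : R :=
  f.@[fun v : 'I_(m * n) => mxvec a 0 v].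
End Det.

(* The module q/N, with N = q^2 + I_m(X), is controlled by gradients at the
   point [abold]: by first-order Taylor expansion an element of q with zero
   gradient lies in q^2.  The gradient of an m-minor is supported on the last
   row of variables, is orthogonal there to the first t rows of [abold], and
   is divisible by Delta (expand along the last row; every cofactor is a
   multiple of the product of the pivots pi^a_i).  Conversely the minor on the
   columns 1, ..., t, j has gradient Delta e_{m,j} in the free directions
   j > t.  Hence the torsion part T/N is described by n - t coordinates
   taken modulo Delta ~ pi^w, i.e. T/N = (O/pi^w)^(n-t), of length (n-t) w. *)

From HB Require Import structures.
From mathcomp Require Import all_boot all_order all_algebra.
From mathcomp Require Import mpoly.
From mathcomp Require Import ring zify.
From Stdlib Require Import ClassicalEpsilon.
Import Order.TTheory GRing.Theory Num.Theory.
Local Open Scope ring_scope.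
Set Implicit Arguments. Unset Strict Implicit. Unset Printing Implicit Defensive.

Section Ideals.
Variables (R : comNzRingType) (A : comAlgType R).
Implicit Types (S J : A -> Prop) (x y : A).

Lemma submodB S x y : is_submod S -> S x -> S y -> S (x - y).
Proof. by case=> _ SD SZ Sx Sy; apply: SD => //; rewrite -scaleN1r; apply: SZ. Qed.

Lemma ideal_submod J : is_ideal J -> is_submod J.
Proof. by case=> J0 JD JM; split=> // c x Jx; rewrite -mulr_algl; apply: JM. Qed.

Lemma ideal_gen_ideal S : is_ideal (ideal_gen S).
Proof.
split=> [J [] //| x y Sx Sy J JJ SJ | g x Sx J JJ SJ]; case: (JJ) => _ JD JM.
  by apply: JD; [apply: Sx | apply: Sy].
by apply: JM; apply: Sx.
Qed.

Lemma ideal_gen_sub S s : S s -> ideal_gen S s.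
Proof. by move=> Ss J _; apply. Qed.

Lemma ideal_gen_min S J x :
  is_ideal J -> (forall s, S s -> J s) -> ideal_gen S x -> J x.
Proof. by move=> JJ SJ; apply. Qed.

Section IdealClosure.
Variable J : A -> Prop.
Hypothesis idealJ : is_ideal J.

Lemma ideal0 : J 0. Proof. by case: idealJ. Qed.
Lemma idealD x y : J x -> J y -> J (x + y). Proof. by case: idealJ => _ + _; apply. Qed.
Lemma idealMl g x : J x -> J (g * x). Proof. by case: idealJ => _ _; apply. Qed.
Lemma idealMr g x : J x -> J (x * g). Proof. by rewrite mulrC; apply: idealMl. Qed.
Lemma idealZ c x : J x -> J (c *: x). Proof. by case: (ideal_submod idealJ) => _ _; apply. Qed.
Lemma idealB x y : J x -> J y -> J (x - y).
Proof. by move=> Jx Jy; apply: idealD => //; rewrite -scaleN1r; apply: idealZ. Qed.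
End IdealClosure.
End Ideals.

Section Taylor.
Variables (R : comNzRingType) (k : nat) (x : 'I_k -> R).
Local Notation P := {mpoly R[k]}.
Implicit Types (f g : P) (u v : 'I_k).

Definition mderiv_at u f : R := (mderiv u f).@[x].

Lemma meval_sum (I : finType) (Q : pred I) (F : I -> P) :
  (\sum_(i | Q i) F i).@[x] = \sum_(i | Q i) (F i).@[x].
Proof. exact: (big_morph _ (mevalD x) (meval0 x)). Qed.

Lemma mderiv_atD u f g : mderiv_at u (f + g) = mderiv_at u f + mderiv_at u g.
Proof. by rewrite /mderiv_at mderivD mevalD. Qed.
Lemma mderiv_atZ u c f : mderiv_at u (c *: f) = c * mderiv_at u f.
Proof. by rewrite /mderiv_at mderivZ mevalZ. Qed.
Lemma mderiv_atB u f g : mderiv_at u (f - g) = mderiv_at u f - mderiv_at u g.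
Proof. by rewrite /mderiv_at mderivB mevalB. Qed.
Lemma mderiv_atM u f g :
  mderiv_at u (f * g) = mderiv_at u f * g.@[x] + f.@[x] * mderiv_at u g.
Proof. by rewrite /mderiv_at mderivM mevalD !mevalM. Qed.
Lemma mderiv_atC u c : mderiv_at u c%:MP = 0.
Proof. by rewrite /mderiv_at mderivC meval0. Qed.
Lemma mderiv_atX u v : mderiv_at u 'X_v = (u == v)%:R.
Proof.
rewrite /mderiv_at mderivX mnm1E mevalZ mevalX eq_sym.
case: (u =P v) => [->|_]; last by rewrite mul0r.
by rewrite mul1r big1 // => i _; rewrite mnmBE subnn expr0.
Qed.
Lemma mderiv_at_sum u (I : finType) (Q : pred I) (F : I -> P) :
  mderiv_at u (\sum_(i | Q i) F i) = \sum_(i | Q i) mderiv_at u (F i).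
Proof. by rewrite /mderiv_at (big_morph _ (mderivD u) (mderiv0 R u)) meval_sum. Qed.

Definition taylor_lin f : P := \sum_u mderiv_at u f *: ('X_u - (x u)%:MP).
Definition taylor1 f : P := (f.@[x])%:MP + taylor_lin f.

Lemma meval_taylor_lin f : (taylor_lin f).@[x] = 0.
Proof.
rewrite /taylor_lin meval_sum big1 // => u _.
by rewrite mevalZ mevalB mevalXU mevalC subrr mulr0.
Qed.

Lemma taylor_linD f g : taylor_lin (f + g) = taylor_lin f + taylor_lin g.
Proof.
by rewrite /taylor_lin -big_split; apply: eq_bigr => u _; rewrite mderiv_atD scalerDl.
Qed.
Lemma taylor_linM f g :
  taylor_lin (f * g) = g.@[x] *: taylor_lin f + f.@[x] *: taylor_lin g.
Proof.
rewrite /taylor_lin !scaler_sumr -big_split; apply: eq_bigr => u _.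
by rewrite mderiv_atM !scalerA scalerDl mulrC [f.@[x] * _]mulrC.
Qed.

Variable J : P -> Prop.
Hypotheses (idealJ : is_ideal J)
  (J_sq : forall f g, f.@[x] = 0 -> g.@[x] = 0 -> J (f * g)).

Lemma taylor1_remD f g :
  J (f - taylor1 f) -> J (g - taylor1 g) -> J (f + g - taylor1 (f + g)).
Proof.
have -> : f + g - taylor1 (f + g) = (f - taylor1 f) + (g - taylor1 g).
  by rewrite /taylor1 mevalD taylor_linD rmorphD; ring.
exact: idealD.
Qed.

Lemma taylor1_remM f g :
  J (f - taylor1 f) -> J (g - taylor1 g) -> J (f * g - taylor1 (f * g)).
Proof.
move=> Jf Jg.
(* the only second-order term is the product of the two linear parts *)
have -> : f * g - taylor1 (f * g) =
    (f - taylor1 f) * g + taylor1 f * (g - taylor1 g) + taylor_lin f * taylor_lin g.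
  rewrite /taylor1 taylor_linM mevalM -!mul_mpolyC rmorphM; ring.
apply: idealD => //; first by apply: idealD => //; [apply: idealMr | apply: idealMl].
by apply: J_sq; apply: meval_taylor_lin.
Qed.

Lemma taylor1_remC c : J (c%:MP - taylor1 c%:MP).
Proof.
rewrite /taylor1 mevalC /taylor_lin big1 ?addr0 ?subrr; first exact: ideal0.
by move=> u _; rewrite mderiv_atC scale0r.
Qed.

Lemma taylor1_remX u : J ('X_u - taylor1 'X_u).
Proof.
rewrite /taylor1 mevalXU /taylor_lin (bigD1 u) //= big1 ?addr0.
  by rewrite mderiv_atX eqxx scale1r [(x u)%:MP + _]addrC subrK subrr; exact: ideal0.
by move=> v /negbTE vu; rewrite mderiv_atX vu scale0r.
Qed.

Lemma taylor1_rem f : J (f - taylor1 f).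
Proof.
have taylor1_remZ c g : J (g - taylor1 g) -> J (c *: g - taylor1 (c *: g)).
  by rewrite -!mul_mpolyC; apply: taylor1_remM; apply: taylor1_remC.
have taylor1_rem1 : J (1 - taylor1 1) by rewrite -(mpolyC1 _ R); exact: taylor1_remC.
elim/mpolyind: f => [|c mm p _ _ Jp]; first by rewrite -mpolyC0; apply: taylor1_remC.
apply: taylor1_remD => //; apply: taylor1_remZ; rewrite mpolyXE_id.
apply: (big_ind (fun g => J (g - taylor1 g))) => //; first exact: taylor1_remM.
move=> i _; elim: (mm i) => [|e IH]; first by rewrite expr0.
by rewrite exprS; apply: taylor1_remM => //; exact: taylor1_remX.
Qed.

Lemma flat_mem_ideal f : f.@[x] = 0 -> (forall u, mderiv_at u f = 0) -> J f.
Proof.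
move=> f0 df0; have := taylor1_rem f.
rewrite /taylor1 /taylor_lin f0 big1 ?addr0 ?rmorph0 ?subr0 //.
by move=> u _; rewrite df0 scale0r.
Qed.
End Taylor.

Definition pow_dvd (R : pzRingType) (pi : R) (k : nat) (x : R) : Prop :=
  exists y, x = y * pi ^+ k.

Section PowDvd.
Variables (R : comNzRingType) (pi : R).
Implicit Types (x y : R) (k e : nat).

Lemma pow_dvd0 k : pow_dvd pi k 0. Proof. by exists 0; rewrite mul0r. Qed.
Lemma pow_dvdn0 x : pow_dvd pi 0 x. Proof. by exists x; rewrite expr0 mulr1. Qed.
Lemma pow_dvdD k x y : pow_dvd pi k x -> pow_dvd pi k y -> pow_dvd pi k (x + y).
Proof. by move=> [x' ->] [y' ->]; exists (x' + y'); rewrite mulrDl. Qed.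
Lemma pow_dvdMl k c x : pow_dvd pi k x -> pow_dvd pi k (c * x).
Proof. by move=> [x' ->]; exists (c * x'); rewrite mulrA. Qed.
Lemma pow_dvdW k e x : (e <= k)%N -> pow_dvd pi k x -> pow_dvd pi e x.
Proof. by move=> ek [x' ->]; exists (x' * pi ^+ (k - e)); rewrite -mulrA -exprD subnK. Qed.
Lemma pow_dvdXl k e : (k <= e)%N -> pow_dvd pi k (pi ^+ e).
Proof. by move=> ke; exists (pi ^+ (e - k)); rewrite -exprD subnK. Qed.
End PowDvd.

Lemma Npow_dvd_exprS (R : idomainType) (pi : R) e :
  pi != 0 -> pi \isn't a GRing.unit -> ~ pow_dvd pi e.+1 (pi ^+ e).
Proof.
move=> pi0 /negP piNU [y /eqP]; rewrite exprS mulrA -subr_eq0 -{1}(mul1r (pi ^+ e)) -mulrBl.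
rewrite mulf_eq0 expf_eq0 (negbTE pi0) andbF orbF subr_eq0 => /eqP yp1.
by apply: piNU; apply/unitrP; exists y; rewrite [pi * y]mulrC -yp1.
Qed.

Section CoordinateLength.
Variables (R : idomainType) (pi : R) (M : comAlgType R) (d w : nat).
Variables (N T : M -> Prop) (z : 'I_d -> M -> R) (h : 'I_d -> M).
Hypotheses (pi_unif : is_dvr_uniformiser pi) (T_submod : is_submod T)
  (zD : forall p f g, z p (f + g) = z p f + z p g)
  (zZ : forall p c f, z p (c *: f) = c * z p f)
  (T_h : forall p, T (h p)) (z_h : forall p p', z p' (h p) = (p' == p)%:R)
  (N_char : forall f, N f <-> T f /\ forall p, pow_dvd pi w (z p f)).
Implicit Types (S : M -> Prop) (f g : M) (p : 'I_d).

Lemma coord0 p : z p 0 = 0.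
Proof. by rewrite -(scale0r 0) zZ mul0r. Qed.

Lemma coord_scaled_basis p p' c : z p' (c *: h p) = c * (p' == p)%:R.
Proof. by rewrite zZ z_h. Qed.

(* Along the chain, the divisibility demanded of coordinate [p] drops from
   [pi ^+ w] to [1] during the steps [p * w] to [p.+1 * w]. *)
Definition layer_exp (i : nat) p : nat := (w - minn w (i - p * w))%N.
Definition layer (i : nat) f := T f /\ forall p, pow_dvd pi (layer_exp i p) (z p f).

Lemma layer_submod i : is_submod (layer i).
Proof.
case: T_submod => T0 TD TZ; split.
- by split=> // p; rewrite coord0; exact: pow_dvd0.
- move=> f g [Tf df] [Tg dg]; split; first exact: TD.
  by move=> p; rewrite zD; apply: pow_dvdD.
- move=> c f [Tf df]; split; first exact: TZ.
  by move=> p; rewrite zZ; apply: pow_dvdMl.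
Qed.

Lemma layerS i f : layer i f -> layer i.+1 f.
Proof. by case=> Tf df; split=> // p; apply: pow_dvdW (df p); rewrite /layer_exp; lia. Qed.

Lemma layer0 f : layer 0 f <-> N f.
Proof.
rewrite N_char /layer /layer_exp.
by split=> -[Tf df]; split=> // p; have := df p; rewrite sub0n minn0 subn0.
Qed.

Lemma layer_top f : layer (d * w) f <-> T f.
Proof.
split=> [[] // | Tf]; split=> // p.
suff -> : layer_exp (d * w) p = 0%N by exact: pow_dvdn0.
have : (p.+1 * w <= d * w)%N by rewrite leq_mul2r ltn_ord orbT.
rewrite /layer_exp mulSn; lia.
Qed.

Lemma layer_strict i : (i < d * w)%N -> exists f, layer i.+1 f /\ ~ layer i f.
Proof.
move=> lt_i_dw; have w_gt0 : (0 < w)%N by case: posnP lt_i_dw => // ->; rewrite muln0.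
have lt_p_d : (i %/ w < d)%N by rewrite ltn_divLR.
pose p : 'I_d := Ordinal lt_p_d.
have Ei := divn_eq i w; have ltiw := ltn_pmod i w_gt0.
exists (pi ^+ layer_exp i.+1 p *: h p); split.
  split; first by case: T_submod => _ _; apply.
  move=> p'; rewrite coord_scaled_basis.
  case: eqP => [->|_]; last by rewrite mulr0; exact: pow_dvd0.
  by rewrite mulr1; exact: pow_dvdXl.
case=> _ /(_ p); rewrite coord_scaled_basis eqxx mulr1.
have -> : layer_exp i p = (layer_exp i.+1 p).+1 by rewrite /layer_exp /=; lia.
by case: pi_unif => pi0 piNU _; apply: Npow_dvd_exprS.
Qed.

Lemma coordinate_chain : submod_chain N T (d * w).
Proof.
exists layer; split=> [f | f | i _ | i lt_i].
- exact: layer0.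
- exact: layer_top.
- exact: layer_submod.
split=> [f | le_si]; first exact: layerS.
by have [f [fS fNi]] := layer_strict lt_i; apply/fNi/le_si.
Qed.

Definition between S := [/\ is_submod S, (forall f, N f -> S f) & (forall f, S f -> T f)].

Definition reaches p S (e : nat) :=
  exists f, [/\ S f, (forall p', (p < p')%N -> z p' f = 0) & z p f = pi ^+ e].

Definition least_exp p S : nat :=
  find (fun e => excluded_middle_informative (reaches p S e)) (iota 0 w.+1).

Lemma reaches_w p S : between S -> reaches p S w.
Proof.
case=> _ NS _; exists (pi ^+ w *: h p); split.
- apply/NS/N_char; split; first by case: T_submod => _ _; apply.
  by move=> p'; rewrite coord_scaled_basis mulrC; apply/pow_dvdMl/pow_dvdXl.
- by move=> p' lt_pp'; rewrite coord_scaled_basis; case: eqP lt_pp' => [->|_]; rewrite ?ltnn ?mulr0.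
- by rewrite coord_scaled_basis eqxx mulr1.
Qed.

Lemma least_expP p S : between S -> (least_exp p S <= w)%N /\ reaches p S (least_exp p S).
Proof.
move=> bS.
have has_w : has (fun e => excluded_middle_informative (reaches p S e)) (iota 0 w.+1).
  by apply/hasP; exists w; [rewrite mem_iota add0n ltnSn | apply/sumboolP/reaches_w].
have lt_w : (least_exp p S < w.+1)%N by rewrite /least_exp -[X in (_ < X)%N](size_iota 0) -has_find.
split=> //; have := nth_find 0 has_w.
by rewrite -/(least_exp p S) nth_iota // add0n => /sumboolP.
Qed.

Lemma least_exp_min p S e : between S -> reaches p S e -> (least_exp p S <= e)%N.
Proof.
move=> bS reach_e; have [le_w _] := least_expP p bS.
rewrite leqNgt; apply/negP => lt_e.
have := before_find 0 lt_e; rewrite nth_iota ?add0n; last by lia.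
by move/negbT/sumboolP.
Qed.

Lemma least_exp_mono p S S' : between S -> between S' -> (forall f, S f -> S' f) ->
  (least_exp p S' <= least_exp p S)%N.
Proof.
move=> bS bS' SS'; have [_ [f [Sf f_tail f_p]]] := least_expP p bS.
by apply: least_exp_min => //; exists f; split=> //; apply: SS'.
Qed.

Lemma least_exp_dvd p S f : between S -> S f ->
  (forall p', (p < p')%N -> z p' f = 0) -> pow_dvd pi (least_exp p S) (z p f).
Proof.
move=> bS Sf f_tail; have [-> | nz] := eqVneq (z p f) 0; first exact: pow_dvd0.
have [_ _ val] := pi_unif; have [e [v vU v_e]] := val _ nz.
suff le_e : (least_exp p S <= e)%N by rewrite v_e; apply/pow_dvdMl/pow_dvdXl.
apply: least_exp_min => //; exists (v^-1 *: f); split.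
- by case: bS => -[_ _ SZ] _ _; apply: SZ.
- by move=> p' lt_pp'; rewrite zZ f_tail ?mulr0.
- by rewrite zZ v_e mulrA mulVr ?mul1r.
Qed.

Lemma eq_least_exp_sub S S' : between S -> between S' -> (forall f, S f -> S' f) ->
  (forall p, least_exp p S = least_exp p S') -> forall f, S' f -> S f.
Proof.
move=> bS bS' SS' eqE; case: (bS) => subS NS _; case: (bS') => subS' _ S'T.
(* descend on the last coordinate that may be nonzero *)
suff descent k : (k <= d)%N ->
    forall f, S' f -> (forall p, (k <= p)%N -> z p f = 0) -> S f.
  by move=> f S'f; apply: (descent d) => // p; rewrite leqNgt ltn_ord.
elim: k => [_ | k IH lt_k] f S'f z_tail.
  apply/NS/N_char; split; first exact: S'T.
  by move=> p; rewrite z_tail //; exact: pow_dvd0.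
pose p : 'I_d := Ordinal lt_k.
have [_ [g [Sg g_tail g_p]]] := least_expP p bS.
have [y z_f] : pow_dvd pi (least_exp p S) (z p f).
  by rewrite eqE; apply: (least_exp_dvd bS' S'f) => p' lt_pp'; apply: z_tail.
have -> : f = (f - y *: g) + y *: g by rewrite subrK.
case: (subS) => _ SD SZ; apply: SD; last exact: SZ.
apply: IH; first exact: ltnW.
  by apply: (submodB subS' S'f); apply: SS'; apply: SZ.
move=> p' le_kp'; rewrite zD -scaleNr zZ.
have [-> | ne_p'p] := eqVneq p' p; first by rewrite z_f g_p mulNr subrr.
have lt_pp' : (p < p')%N by move: ne_p'p; rewrite -val_eqE /=; lia.
by rewrite z_tail ?g_tail ?mulr0 ?addr0 //; lia.
Qed.

(* [w - least_exp p S] is the length of the [p]-th graded piece of [S / N]. *)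
Definition potential S : nat := \sum_p (w - least_exp p S).

Lemma potential_le S : (potential S <= d * w)%N.
Proof.
apply: (@leq_trans (\sum_(p < d) w)); first by apply: leq_sum => p _; apply: leq_subr.
by rewrite big_const_ord iter_addn_0 mulnC.
Qed.

Lemma potential_lt S S' : between S -> between S' -> (forall f, S f -> S' f) ->
  ~ (forall f, S' f -> S f) -> (potential S < potential S')%N.
Proof.
move=> bS bS' SS' S'NS; have mono p := least_exp_mono p bS bS' SS'.
have [/existsP [p lt_p] | /existsPn eqE] := boolP [exists p, least_exp p S' < least_exp p S]%N.
  rewrite /potential (bigD1 p) //= [X in (_ < X)%N](bigD1 p) //=.
  have le_w : (least_exp p S <= w)%N by case: (least_expP p bS).
  have : (\sum_(p' | p' != p) (w - least_exp p' S) <= \sum_(p' | p' != p) (w - least_exp p' S'))%N.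
    by apply: leq_sum => p' _; apply: leq_sub2l.
  by move: (\sum_(p' | _) _)%N (\sum_(p' | _) _)%N => s s'; lia.
exfalso; apply: S'NS; apply: (eq_least_exp_sub bS bS' SS') => p.
by apply/eqP; rewrite eqn_leq mono leqNgt eqE.
Qed.

Lemma no_longer_chain : ~ submod_chain N T (d * w).+1.
Proof.
move=> [c [c0 ctop csub cstep]]; set k := (d * w).+1 in ctop csub cstep.
have c_up i j : (i + j <= k)%N -> forall f, c i f -> c (i + j)%N f.
  elim: j => [|j IH] le_ijk f cif; first by rewrite addn0.
  by rewrite addnS; apply: (proj1 (cstep _ _)); [lia | apply: IH => //; lia].
have c_between i : (i <= k)%N -> between (c i).
  move=> le_ik; split; first exact: csub.
    by move=> f /c0; rewrite -[i]add0n; apply: c_up; rewrite add0n.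
  by move=> f cif; apply/ctop; rewrite -(subnKC le_ik); apply: c_up; rewrite ?subnKC.
have pot_ge i : (i <= k)%N -> (i <= potential (c i))%N.
  elim: i => [|i IH] lt_ik //.
  have [c_sub c_nsub] := cstep i lt_ik.
  have := potential_lt (c_between i (ltnW lt_ik)) (c_between i.+1 lt_ik) c_sub c_nsub.
  by have := IH (ltnW lt_ik); lia.
by have := pot_ge k (leqnn k); have := potential_le (c k); rewrite /k; lia.
Qed.

Theorem module_length_coordinates : module_length N T (d * w).
Proof. by split; [exact: coordinate_chain | exact: no_longer_chain]. Qed.
End CoordinateLength.

Lemma var_idx_inj m n (i i' : 'I_m) (j j' : 'I_n) :
  var_idx i j = var_idx i' j' -> i = i' /\ j = j'.
Proof. by rewrite /var_idx /mxvec_index => /cast_ord_inj /enum_rank_inj [-> ->]. Qed.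

Lemma det_diag_fun (R : comNzRingType) k (f : 'I_k -> R) :
  \det (\matrix_(i, j) (if i == j then f i else 0)) = \prod_i f i.
Proof.
have -> : \matrix_(i, j) (if i == j then f i else 0) = diag_mx (\row_i f i).
  by apply/matrixP => i j; rewrite !mxE eq_sym; case: eqP => // ->.
by rewrite det_diag; apply: eq_bigr => i _; rewrite mxE.
Qed.

Lemma eq_cofactor (R : comNzRingType) k (A B : 'M[R]_k) i0 j0 :
  (forall i j, i != i0 -> A i j = B i j) -> cofactor A i0 j0 = cofactor B i0 j0.
Proof.
by move=> eqAB; congr (_ * \det _); apply/matrixP => i j; rewrite !mxE eqAB // eq_sym neq_lift.
Qed.

Section DeterminantalPoint.
Variables (R : idomainType) (pi : R) (t n : nat) (a : nat -> nat) (w : nat).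
Local Notation m := t.+1.
Local Notation P := {mpoly R[m * n]}.
Implicit Types (f g : P).

Definition abold : 'M[R]_(m, n) :=
  \matrix_(i, j) (if ((i < t)%N && (nat_of_ord i == nat_of_ord j %% t)%N) then pi ^+ a i else 0).
Definition apoint (v : 'I_(m * n)) : R := mxvec abold 0 v.
Local Notation dX := (mderiv_at apoint).
Definition lastv (j : 'I_n) : 'I_(m * n) := var_idx ord_max j.
Definition Delta : R := \prod_(i < t) pi ^+ a i.

Lemma apoint_var i j : apoint (var_idx i j) = abold i j. Proof. exact: mxvecE. Qed.
Lemma abold_last j : abold ord_max j = 0. Proof. by rewrite mxE ltnn. Qed.
Lemma abold_top (i : 'I_m) j :
  (i < t)%N -> abold i j = pi ^+ a i * (nat_of_ord i == j %% t)%N%:R.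
Proof. by move=> lt_it; rewrite mxE lt_it /=; case: eqP; rewrite ?mulr1 ?mulr0. Qed.
Lemma lastv_inj : injective lastv.
Proof. by move=> j j' /var_idx_inj []. Qed.

Definition torsion_cond f := [/\ f.@[apoint] = 0,
  forall i j, i != ord_max -> dX (var_idx i j) f = 0 &
  forall r : 'I_m, (r < t)%N -> \sum_j dX (lastv j) f * abold r j = 0].

Lemma torsion_cond_ideal : is_ideal torsion_cond.
Proof.
split.
- split; first by rewrite meval0.
    by move=> i j _; rewrite -(scale0r 0) mderiv_atZ mul0r.
  by move=> r _; rewrite big1 // => j _; rewrite -(scale0r 0) mderiv_atZ !mul0r.
- move=> f g [f0 fr fo] [g0 gr go]; split; first by rewrite mevalD f0 g0 addr0.
    by move=> i j ne_i; rewrite mderiv_atD fr // gr // addr0.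
  move=> r lt_rt; under eq_bigr => j _ do rewrite mderiv_atD mulrDl.
  by rewrite big_split /= fo // go // addr0.
- move=> g f [f0 fr fo]; split; first by rewrite mevalM f0 mulr0.
    by move=> i j ne_i; rewrite mderiv_atM f0 fr // !mulr0 addr0.
  move=> r lt_rt; under eq_bigr => j _ do rewrite mderiv_atM f0 mulr0 add0r -mulrA.
  by rewrite -big_distrr /= fo // mulr0.
Qed.

Lemma torsion_condZK c f : c != 0 -> torsion_cond (c *: f) -> torsion_cond f.
Proof.
move=> c0 [f0 fr fo]; have cK x : c * x = 0 -> x = 0.
  by move/eqP; rewrite mulf_eq0 (negbTE c0) => /eqP.
split.
- by apply: cK; rewrite -mevalZ.
- by move=> i j ne_i; apply: cK; rewrite -mderiv_atZ fr.
- move=> r lt_rt; apply: cK; rewrite big_distrr /= -[RHS](fo r lt_rt).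
  by apply: eq_bigr => j _; rewrite mderiv_atZ mulrA.
Qed.

Definition last_row_dvd (k : nat) f := forall j, pow_dvd pi k (dX (lastv j) f).

Section Minor.
Variables (r : 'I_m -> 'I_m) (c : 'I_m -> 'I_n) (i0 : 'I_m).
Hypotheses (r_inj : injective r) (r_i0 : r i0 = ord_max).

Definition minorX : 'M[P]_m := \matrix_(i, j) (@genericmx R m n) (r i) (c j).
Definition minor_at : 'M[R]_m := \matrix_(i, k) abold (r i) (c k).

Lemma map_minorX : map_mx (meval apoint) minorX = minor_at.
Proof. by apply/matrixP => i j; rewrite !mxE mevalXU /apoint mxvecE mxE. Qed.

Lemma meval_minor : (\det minorX).@[apoint] = 0.
Proof.
rewrite -det_map_mx map_minorX (expand_det_row _ i0) big1 // => k _.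
by rewrite mxE r_i0 abold_last mul0r.
Qed.

Lemma dX_minor u :
  dX u (\det minorX) = \sum_k (u == lastv (c k))%:R * cofactor minor_at i0 k.
Proof.
rewrite (expand_det_row _ i0) mderiv_at_sum; apply: eq_bigr => k _.
rewrite mderiv_atM {2}/minorX !mxE r_i0 mderiv_atX mevalXU apoint_var abold_last.
by rewrite mul0r addr0 -map_minorX cofactor_map_mx.
Qed.

Lemma dX_minor_off i j : i != ord_max -> dX (var_idx i j) (\det minorX) = 0.
Proof.
move=> ne_i; rewrite dX_minor big1 // => k _.
by case: eqP => [/var_idx_inj [eq_i _] | _]; [rewrite eq_i eqxx in ne_i | rewrite mul0r].
Qed.

Lemma Delta_dvd_cofactor k : exists x, cofactor minor_at i0 k = x * Delta.
Proof.
(* replacing row [i0] by a unit vector leaves a matrix whose other rows are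
   [pi ^+ a (r i)] times 0/1 rows *)
pose N1 : 'M[R]_m := \matrix_(i, l) if i == i0 then (l == k)%:R else minor_at i l.
have -> : cofactor minor_at i0 k = \det N1.
  rewrite (@eq_cofactor _ _ _ N1) => [|i l ne_i]; last by rewrite [RHS]mxE (negbTE ne_i).
  rewrite (expand_det_row N1 i0) (bigD1 k) //= big1 ?addr0 => [|l ne_lk].
    by rewrite mxE !eqxx mul1r.
  by rewrite mxE eqxx (negbTE ne_lk) mul0r.
pose g (i : 'I_m) := if i == ord_max then 1 else pi ^+ a i.
pose B : 'M[R]_m := \matrix_(i, l) if i == i0 then (l == k)%:R
                                   else (nat_of_ord (r i) == c l %% t)%N%:R.
have -> : N1 = diag_mx (\row_i g (r i)) *m B.
  rewrite mul_diag_mx; apply/matrixP => i l; rewrite !mxE /g -r_i0 (inj_eq r_inj).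
  case: eqP => [_ | /eqP ne_i]; first by rewrite mul1r.
  have lt_rt : (r i < t)%N.
    by have := ltn_ord (r i); move: ne_i; rewrite -(inj_eq r_inj) r_i0 -val_eqE /=; lia.
  by rewrite lt_rt /=; case: eqP; rewrite ?mulr1 ?mulr0.
exists (\det B); rewrite det_mulmx det_diag mulrC; congr (_ * _).
under eq_bigr => i _ do rewrite mxE.
transitivity (\prod_i g i); first by rewrite [RHS](reindex_inj r_inj).
rewrite big_ord_recr /= /g eqxx mulr1.
by apply: eq_bigr => i _; rewrite ifN // -val_eqE /= neq_ltn ltn_ord.
Qed.

Lemma dX_minor_dvd j : exists x, dX (lastv j) (\det minorX) = x * Delta.
Proof.
rewrite dX_minor; apply: (big_ind (fun v => exists x, v = x * Delta)).
- by exists 0; rewrite mul0r.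
- by move=> _ _ [x ->] [y ->]; exists (x + y); rewrite mulrDl.
move=> k _; have [x ->] := Delta_dvd_cofactor k.
by exists ((lastv j == lastv (c k))%:R * x); rewrite mulrA.
Qed.

Lemma dX_minor_orth (r0 : 'I_m) : (r0 < t)%N ->
  \sum_j dX (lastv j) (\det minorX) * abold r0 j = 0.
Proof.
move=> lt_r0t.
under eq_bigr => j _ do rewrite dX_minor big_distrl.
rewrite exchange_big /=.
under eq_bigr => k _.
  rewrite (bigD1 (c k)) //= big1 ?addr0 => [|j ne_j]; last first.
    by rewrite (inj_eq lastv_inj) (negbTE ne_j) !mul0r.
  rewrite eqxx mul1r mulrC.
over.
(* the sum expands along row [i0] the determinant of [minor_at] with that row
   replaced by row [r0] of [abold], which is already a row of [minor_at] *)
pose N0 : 'M[R]_m := \matrix_(i, l) if i == i0 then abold r0 (c l) else minor_at i l.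
transitivity (\det N0).
  rewrite (expand_det_row _ i0); apply: eq_bigr => k _.
  rewrite [N0 i0 k]mxE eqxx; congr (_ * _); apply: eq_cofactor => i l ne_i.
  by rewrite [RHS]mxE (negbTE ne_i).
pose i1 := invF r_inj r0; have r_i1 : r i1 = r0 by rewrite f_invF.
have ne_i1 : i1 != i0.
  by apply: contraTneq lt_r0t => eq_i1; rewrite -r_i1 eq_i1 r_i0 ltnn.
apply: (@determinant_alternate _ _ _ i0 i1); first by rewrite eq_sym.
by move=> l; rewrite !mxE eqxx (negbTE ne_i1) r_i1.
Qed.
End Minor.

Hypotheses (pi_unif : is_dvr_uniformiser pi) (lt_tn : (t < n)%N)
  (Delta_val : dvr_val pi Delta w).

Definition Ngen f := (exists x y, [/\ x.@[apoint] = 0, y.@[apoint] = 0 & f = x * y])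
  \/ kminors m (@genericmx R m n) f.
Local Notation N := (ideal_gen Ngen).

Lemma N_ideal : is_ideal N. Proof. exact: ideal_gen_ideal. Qed.

Lemma torsion_dvd_ideal : is_ideal (fun f => torsion_cond f /\ last_row_dvd w f).
Proof.
have [T0 TD TM] := torsion_cond_ideal; split.
- split=> // j; rewrite -(scale0r 0) mderiv_atZ mul0r; exact: pow_dvd0.
- move=> f g [tf df] [tg dg]; split; first exact: TD.
  by move=> j; rewrite mderiv_atD; apply: pow_dvdD.
- move=> g f [tf df]; split; first exact: TM.
  by move=> j; case: tf => f0 _ _; rewrite mderiv_atM f0 mulr0 add0r; apply: pow_dvdMl.
Qed.

Lemma Ngen_torsion_dvd f : Ngen f -> torsion_cond f /\ last_row_dvd w f.
Proof.
case=> [[x [y [x0 y0 ->]]] | [r [c [r_inj _ ->]]]].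
  have dXxy u : dX u (x * y) = 0 by rewrite mderiv_atM x0 y0 mulr0 mul0r addr0.
  split; last by move=> j; rewrite dXxy; exact: pow_dvd0.
  by split=> [|i j _|r0 _]; rewrite ?mevalM ?x0 ?mul0r ?dXxy // big1 // => j _; rewrite dXxy mul0r.
pose i0 := invF r_inj ord_max; have r_i0 : r i0 = ord_max by rewrite f_invF.
split; first split.
- exact: (meval_minor c r_i0).
- exact: (dX_minor_off c r_i0).
- exact: (dX_minor_orth c r_inj r_i0).
move=> j; have [x ->] := dX_minor_dvd c r_inj r_i0 j.
by have [u _ ->] := Delta_val; rewrite mulrA; apply: pow_dvdMl; exact: pow_dvdXl.
Qed.

Lemma N_torsion_dvd f : N f -> torsion_cond f /\ last_row_dvd w f.
Proof. exact: ideal_gen_min torsion_dvd_ideal Ngen_torsion_dvd. Qed.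

Lemma N_flat f : f.@[apoint] = 0 -> (forall u, dX u f = 0) -> N f.
Proof.
apply: (flat_mem_ideal N_ideal) => g h g0 h0.
by apply: ideal_gen_sub; left; exists g, h.
Qed.

Lemma pi_neq0 : pi != 0. Proof. by case: pi_unif. Qed.

Lemma torsion_cond_flat f : torsion_cond f ->
  (forall j : 'I_n, (t <= j)%N -> dX (lastv j) f = 0) -> forall u, dX u f = 0.
Proof.
move=> [f0 fr fo] free0 u; case/mxvec_indexP: u => i j.
change (mxvec_index i j) with (var_idx i j).
have [-> | ne_i] := eqVneq i ord_max; last exact: fr.
have [le_tj | lt_jt] := leqP t j; first exact: free0.
(* row [j] of [abold] is [pi ^+ a j] at column [j] and otherwise lives in
   columns [>= t], where the derivatives vanish *)
pose r0 : 'I_m := Ordinal (leq_trans lt_jt (leqnSn t)).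
have := fo r0 lt_jt; rewrite (bigD1 j) //= big1 ?addr0 => [|j' ne_j'].
  rewrite abold_top //= (modn_small lt_jt) eqxx mulr1 => /eqP.
  by rewrite mulf_eq0 expf_eq0 (negbTE pi_neq0) andbF orbF => /eqP.
have [le_tj' | lt_j't] := leqP t j'; first by rewrite free0 // mul0r.
rewrite abold_top //= (modn_small lt_j't).
by rewrite (_ : (j == j' :> nat) = false) ?mulr0 //; apply/negbTE; rewrite eq_sym.
Qed.

Definition stair_cols (j : 'I_n) (k : 'I_m) : 'I_n :=
  oapp (widen_ord (ltnW lt_tn)) j (unlift ord_max k).

Lemma stair_cols_lt (j : 'I_n) k : k != ord_max -> (stair_cols j k < t)%N.
Proof. by rewrite eq_sym => /unlift_some [k' _ eq_k]; rewrite /stair_cols eq_k /= ltn_ord. Qed.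

Lemma stair_cols_inj (j : 'I_n) : (t <= j)%N -> injective (stair_cols j).
Proof.
move=> le_tj k k'.
have [-> | ne_k] := eqVneq k ord_max; have [-> | ne_k'] := eqVneq k' ord_max => //.
- by move=> eq_j; have := stair_cols_lt j ne_k'; rewrite -eq_j /stair_cols unlift_none /=; lia.
- by move=> eq_j; have := stair_cols_lt j ne_k; rewrite eq_j /stair_cols unlift_none /=; lia.
move: ne_k ne_k'; rewrite ![_ == ord_max]eq_sym => /unlift_some [l -> _] /unlift_some [l' -> _].
by rewrite /stair_cols !liftK /= => /(congr1 val) /= /val_inj ->.
Qed.

Definition stair_minor (j : 'I_n) : P := \det (minorX id (stair_cols j)).

Lemma N_stair_minor (j : 'I_n) : (t <= j)%N -> N (stair_minor j).
Proof.
move=> le_tj; apply: ideal_gen_sub; right.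
by exists id, (stair_cols j); split => //; exact: stair_cols_inj.
Qed.

Lemma dX_stair_minor (j j' : 'I_n) : (t <= j)%N -> (t <= j')%N ->
  dX (lastv j') (stair_minor j) = (j' == j)%:R * Delta.
Proof.
move=> le_tj le_tj'; rewrite (@dX_minor id _ ord_max) // (bigD1 ord_max) //=.
rewrite big1 ?addr0 => [|k ne_k]; last first.
  by rewrite (inj_eq lastv_inj); case: eqP (stair_cols_lt j ne_k) => [<-|]; [lia | rewrite mul0r].
rewrite /stair_cols unlift_none /= (inj_eq lastv_inj); congr (_ * _).
(* the complementary minor is the diagonal matrix [D] *)
rewrite /cofactor -signr_odd addnn odd_double expr0 mul1r /Delta -det_diag_fun.
congr (\det _); apply/matrixP => x y.
rewrite !mxE liftK /= /bump (leqNgt t x) ltn_ord add0n ltn_ord.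
by rewrite (modn_small (ltn_ord y)) val_eqE.
Qed.

Lemma N_char f : N f <->
  torsion_cond f /\ forall j : 'I_n, (t <= j)%N -> pow_dvd pi w (dX (lastv j) f).
Proof.
split=> [/N_torsion_dvd [tf df] | [tf df]]; first by split=> // j _.
have [u uU Delta_u] := Delta_val.
have ex_y (j : 'I_n) : exists y, (t <= j)%N ==> (dX (lastv j) f == y * pi ^+ w).
  have [le_tj | _] := leqP t j; last by exists 0.
  by have [y ->] := df j le_tj; exists y; rewrite eqxx.
pose y j := xchoose (ex_y j).
have dfy (j : 'I_n) : (t <= j)%N -> dX (lastv j) f = y j * pi ^+ w.
  by move=> le_tj; apply/eqP; apply: (implyP (xchooseP (ex_y j))).
(* subtract the combination of staircase minors with the same derivatives *)
pose g := \sum_(j : 'I_n | (t <= j)%N) (y j * u^-1) *: stair_minor j.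
have Ng : N g.
  apply: big_ind => [||j /N_stair_minor]; first exact: (ideal0 N_ideal).
    exact: (idealD N_ideal).
  exact: (idealZ N_ideal).
have tfg : torsion_cond (f - g).
  by apply: (idealB torsion_cond_ideal tf); case: (N_torsion_dvd Ng).
rewrite -(subrK g f); apply: (idealD N_ideal _ Ng); apply: N_flat; first by case: tfg.
apply: (torsion_cond_flat tfg) => j' le_tj'.
rewrite mderiv_atB mderiv_at_sum (bigD1 j') //= big1 ?addr0 => [|j /andP [le_tj ne_j]].
  by rewrite mderiv_atZ dX_stair_minor // eqxx mul1r Delta_u dfy // mulrA mulrVK ?subrr.
by rewrite mderiv_atZ dX_stair_minor // eq_sym (negbTE ne_j) mul0r mulr0.
Qed.

Definition Tors f := f.@[apoint] = 0 /\ exists2 c : R, c != 0 & N (c *: f).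

Lemma Tors_char f : Tors f <-> torsion_cond f.
Proof.
split=> [[_ [c c0 /N_torsion_dvd [tcf _]]] | tf]; first exact: torsion_condZK tcf.
split; first by case: tf.
exists (pi ^+ w); first by rewrite expf_neq0 ?pi_neq0.
apply/N_char; split; first exact: (idealZ torsion_cond_ideal).
by move=> j _; rewrite mderiv_atZ mulrC; apply/pow_dvdMl/pow_dvdXl.
Qed.

Hypothesis t_gt0 : (0 < t)%N.

Lemma free_col_subproof (p : 'I_(n - t)) : (t + p < n)%N.
Proof. by have := ltn_ord p; lia. Qed.
Definition free_col (p : 'I_(n - t)) : 'I_n := Ordinal (free_col_subproof p).
Definition free_coord (p : 'I_(n - t)) f : R := dX (lastv (free_col p)) f.

Lemma free_col_inj : injective free_col.
Proof. by move=> p p' /(congr1 val) /addnI /val_inj. Qed.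

Lemma free_colP (j : 'I_n) : (t <= j)%N -> exists p, j = free_col p.
Proof.
move=> le_tj; have lt_p : (j - t < n - t)%N by have := ltn_ord j; lia.
by exists (Ordinal lt_p); apply: val_inj => /=; lia.
Qed.

Lemma res_col_subproof (p : 'I_(n - t)) : ((t + p) %% t < n)%N.
Proof. by have := ltn_mod (t + p) t; rewrite t_gt0; lia. Qed.
Definition res_col (p : 'I_(n - t)) : 'I_n := Ordinal (res_col_subproof p).

(* the columns [t + p] and [(t + p) mod t] of [abold] agree *)
Definition free_basis (p : 'I_(n - t)) : P :=
  'X_(lastv (free_col p)) - 'X_(lastv (res_col p)).

Lemma dX_free_basis u p :
  dX u (free_basis p) = (u == lastv (free_col p))%:R - (u == lastv (res_col p))%:R.
Proof. by rewrite mderiv_atB !mderiv_atX. Qed.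

Lemma free_basis_torsion p : torsion_cond (free_basis p).
Proof.
split.
- by rewrite mevalB !mevalXU !apoint_var !abold_last subrr.
- move=> i j ne_i; rewrite dX_free_basis.
  have ne_last j' : (var_idx i j == lastv j') = false.
    by apply/negbTE/eqP => /var_idx_inj [eq_i _]; rewrite eq_i eqxx in ne_i.
  by rewrite !ne_last subrr.
- move=> r lt_rt; under eq_bigr => j _ do rewrite dX_free_basis !(inj_eq lastv_inj) mulrBl.
  rewrite sumrB.
  have pick (j0 : 'I_n) : \sum_j (j == j0)%:R * abold r j = abold r j0.
    by rewrite (bigD1 j0) //= eqxx mul1r big1 ?addr0 // => j /negbTE ->; rewrite mul0r.
  by rewrite !pick !abold_top //= modn_mod subrr.
Qed.

Lemma free_coord_basis p p' : free_coord p' (free_basis p) = (p' == p)%:R.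
Proof.
rewrite /free_coord dX_free_basis !(inj_eq lastv_inj) (inj_eq free_col_inj).
rewrite (_ : free_col p' == res_col p = false) ?subr0 //.
by apply/negP => /eqP/(congr1 val) /=; have := ltn_mod (t + p) t; rewrite t_gt0; lia.
Qed.

Lemma module_length_Tors : module_length N Tors ((n - t) * w).
Proof.
have [T0 TD TM] := torsion_cond_ideal.
apply: (@module_length_coordinates _ _ _ _ _ _ _ free_coord free_basis pi_unif).
- apply: ideal_submod; split=> [|f g /Tors_char tf /Tors_char tg|g f /Tors_char tf];
    apply/Tors_char; [exact: T0 | exact: TD | exact: TM].
- by move=> p f g; apply: mderiv_atD.
- by move=> p c f; apply: mderiv_atZ.
- by move=> p; apply/Tors_char/free_basis_torsion.
- exact: free_coord_basis.
move=> f; rewrite N_char Tors_char.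
split=> -[tf df]; split=> //; first by move=> p; apply/df/leq_addr.
by move=> j /free_colP [p ->]; apply: df.
Qed.
End DeterminantalPoint.

Unset Implicit Arguments.

Theorem lemma5p9 (R : idomainType) (pi : R) (m n : nat)
  (a : nat -> nat) (w : nat) :
  is_dvr_uniformiser pi ->
  (2 <= m)%N -> (m <= n)%N ->
  (forall i j, (i <= j)%N -> (j < m.-1)%N -> (a i <= a j)%N) ->
  (* w = nu(Delta), Delta = det D, D = diag(pi^a_1, ..., pi^a_t) *)
  dvr_val pi (\det (\matrix_(i < m.-1, j < m.-1)
                      (if i == j then pi ^+ a i else 0))) w ->
  let t := m.-1 in
  (* the point abold in O^{m x n} *)
  let abold : 'M[R]_(m, n) :=
    \matrix_(i, j) (if ((i < t)%N && (nat_of_ord i == nat_of_ord j %% t)%N) then pi ^+ a i else 0) in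
  let lam := evalmx abold in
  (* q = ker (lambda_P : P -> O) *)
  let q : {mpoly R[m * n]} -> Prop := fun f => lam f = 0 in
  (* N = q^2 + I_m(X); then p/p^2 = q / N for p = ker lambda_A, A = P / I_m(X) *)
  let N := ideal_gen (fun f => (exists x y, [/\ q x, q y & f = x * y])
                               \/ kminors m (@genericmx R m n) f) in
  (* preimage of the torsion submodule of p/p^2 *)
  let T : {mpoly R[m * n]} -> Prop :=
    fun f => q f /\ exists2 c : R, c != 0 & N (c *: f) in
  module_length N T ((n - t) * w)%N.
Proof.
case: m => [|t] // pi_unif le2t lt_tn _; rewrite det_diag_fun => Delta_w.
exact: (module_length_Tors pi_unif lt_tn Delta_w le2t).
Qed.
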